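(* Let $q\geq 5$ and $n\geq 1$ be integers, and let $c>0$ be a real number such that $k=\frac{n(q-1)}{2q}\bigl(\log (n(q-1))+c\bigr)$ is an integer. Then $$\Vert \nu_n^{*k}-\pi_n\Vert_{TV}^2\leq \frac14\left(e^{e^{-c}}-1\right).$$
   Context: For integers $n\geq1$, $q\geq2$, the Hamming scheme $H(n,q)$ is the graph with vertex set $X_n=\{0,1,\dots,q-1\}^n$ in which $x=(x_1,\dots,x_n)$ and $x'=(x'_1,\dots,x'_n)$ are adjacent ($x\sim x'$) iff $d(x,x'):=\#\{j: x_j\neq x'_j\}=1$. The simple random walk has transition probability $p_n(x,x')=\frac{1}{n(q-1)}$ if $x\sim x'$ and $0$ otherwise. Let $p_n^{(0)}(x,x')=\delta_{x,x'}$, $p_n^{(k)}(x,x')=\sum_{y\in X_n}p_n^{(k-1)}(x,y)p_n(y,x')$, let $x^{(0)}=(0,\dots,0)$, and let $\nu_n^{*k}(x)=p_n^{(k)}(x^{(0)},x)$ be the $k$-step distribution started at $x^{(0)}$. $\pi_n$ is the uniform probability measure on $X_n$. For measures $\mu,\nu$ on $X_n$, $\Vert\mu-\nu\Vert_{TV}=\max_{S\subset X_n}|\mu(S)-\nu(S)|$. *)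

From Stdlib Require Import Reals.
From mathcomp Require Import all_boot.
Set Implicit Arguments. Unset Strict Implicit. Unset Printing Implicit Defensive.

Local Open Scope R_scope.

Definition X (n q : nat) : finType := {ffun 'I_n -> 'I_q}.

Definition hdist (n q : nat) (x y : X n q) : nat := #|[set j | x j != y j]|.

Definition pn (n q : nat) (x y : X n q) : R :=
  if hdist x y == 1%N then / (INR n * (INR q - 1)) else 0.

Fixpoint pnk (n q : nat) (k : nat) (x y : X n q) : R :=
  match k with
  | O => if x == y then 1 else 0
  | S k' => \big[Rplus/0]_(z : X n q) (pnk k' x z * pn z y)
  end.

Definition x0 (n q : nat) (Hq : (0 < q)%N) : X n q := [ffun _ => Ordinal Hq].

Definition nu (n q : nat) (Hq : (0 < q)%N) (k : nat) (x : X n q) : R :=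
  pnk k (x0 n Hq) x.

Definition pi_unif (n q : nat) (x : X n q) : R := / INR #|X n q|.

Definition meas (T : finType) (mu : T -> R) (S : {set T}) : R :=
  \big[Rplus/0]_(x in S) mu x.

Definition TV (T : finType) (mu nu : T -> R) : R :=
  \big[Rmax/0]_(S : {set T}) Rabs (meas mu S - meas nu S).

From HB Require Import structures.
From Stdlib Require Import Reals Lra.
From mathcomp Require Import all_boot.
Set Implicit Arguments. Unset Strict Implicit. Unset Printing Implicit Defensive.
Local Open Scope R_scope.

(* Index the subsets of coordinates by b : {ffun 'I_n -> bool} and put
   efun b y = prod_(i in b) (q [y_i = 0] - 1).  These functions form an orthogonal
   eigenbasis of the walk: efun b has eigenvalue 1 - |b| q / (n (q - 1)) and
   sum_y (efun b y)^2 = q^n (q - 1)^|b|.  Expanding nu^k - pi in this basis gives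
     |X| sum_y (nu^k y - pi y)^2 = sum_(b <> 0) eigval_b^(2k) (q - 1)^|b|,
   while Cauchy-Schwarz gives 4 TV^2 <= |X| sum_y (nu^k y - pi y)^2.  For the chosen k,
   (1 - t)^2 <= exp (-2t) on [0, 5/4] bounds the term of b by (exp (-c) / n)^|b|, and these
   sum to (1 + exp (-c) / n)^n - 1 <= exp (exp (-c)) - 1. *)

Fact RplusA : associative Rplus. Proof. by move=> *; ring. Qed.
Fact RmultA : associative Rmult. Proof. by move=> *; ring. Qed.

HB.instance Definition _ := Monoid.isComLaw.Build R 0 Rplus RplusA Rplus_comm Rplus_0_l.
HB.instance Definition _ := Monoid.isComLaw.Build R 1 Rmult RmultA Rmult_comm Rmult_1_l.
HB.instance Definition _ := Monoid.isMulLaw.Build R 0 Rmult Rmult_0_l Rmult_0_r.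
HB.instance Definition _ :=
  Monoid.isAddLaw.Build R Rmult Rplus Rmult_plus_distr_r Rmult_plus_distr_l.

Lemma Rsum_const (T : finType) (A : {pred T}) (c : R) :
  \big[Rplus/0]_(i in A) c = INR #|A| * c.
Proof. by rewrite big_const; elim: #|A| => [|m IH]; rewrite ?iterS ?IH ?S_INR /=; ring. Qed.

Lemma Rsum_constT (T : finType) (c : R) : \big[Rplus/0]_(i : T) c = INR #|T| * c.
Proof. exact: Rsum_const. Qed.

Lemma Rprod_const (T : finType) (A : {pred T}) (c : R) :
  \big[Rmult/1]_(i in A) c = c ^ #|A|.
Proof. by rewrite big_const; elim: #|A| => [|m IH]; rewrite ?iterS ?IH. Qed.

Lemma Rsum_le (T : finType) (P : pred T) (F G : T -> R) :
  (forall i, P i -> F i <= G i) ->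
  \big[Rplus/0]_(i | P i) F i <= \big[Rplus/0]_(i | P i) G i.
Proof. by move=> FG; apply: (big_ind2 Rle) => *; [lra | lra | exact: FG]. Qed.

Lemma Rsum_mull (T : finType) (P : pred T) (c : R) (F : T -> R) :
  \big[Rplus/0]_(i | P i) (c * F i) = c * \big[Rplus/0]_(i | P i) F i.
Proof. by rewrite big_distrr. Qed.

Lemma Rsum_sub (T : finType) (P : pred T) (F G : T -> R) :
  \big[Rplus/0]_(i | P i) (F i - G i) =
  \big[Rplus/0]_(i | P i) F i - \big[Rplus/0]_(i | P i) G i.
Proof. by rewrite big_split /= /Rminus (big_morph Ropp Ropp_plus_distr Ropp_0). Qed.

Lemma Rsum_ge0 (T : finType) (P : pred T) (F : T -> R) :
  (forall i, P i -> 0 <= F i) -> 0 <= \big[Rplus/0]_(i | P i) F i.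
Proof. by move=> F0; apply: big_ind => *; [lra | lra | exact: F0]. Qed.

Lemma Rabs_sum_le (T : finType) (P : pred T) (F : T -> R) :
  Rabs (\big[Rplus/0]_(i | P i) F i) <= \big[Rplus/0]_(i | P i) Rabs (F i).
Proof.
apply: (big_ind2 (fun a b => Rabs a <= b)) => [|a b c d ab cd|i _].
- by rewrite Rabs_R0; lra.
- by apply: Rle_trans (Rabs_triang _ _) _; lra.
- exact: Rle_refl.
Qed.

Lemma Rsum_if_eq (T : finType) (x : T) (A B : R) :
  \big[Rplus/0]_a (if a == x then A else B) = A + (INR #|T| - 1) * B.
Proof.
rewrite (eq_bigr (fun a => (if a == x then A - B else 0) + B)) => [|a _].
  (* The rewrites leave copies of [INR #|T|] differing in hidden coercions, which
     [ring] would treat as distinct atoms; [set] identifies them. *)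
  by rewrite big_split /= -big_mkcond big_pred1_eq Rsum_constT; set N := INR #|T|; ring.
by case: eqP => _; ring.
Qed.

Lemma Rsum_if_neq (T : finType) (x : T) (F : T -> R) :
  \big[Rplus/0]_a (if a == x then 0 else F a) = \big[Rplus/0]_a F a - F x.
Proof.
rewrite [in RHS](bigD1 x) //= Rplus_minus_l [RHS]big_mkcond.
by apply: eq_bigr => a _; case: eqP.
Qed.

(* Cauchy-Schwarz, from the nonnegativity of sum_(x, y) (a x - a y)^2. *)
Lemma Rsum_sqr_le (T : finType) (a : T -> R) :
  (\big[Rplus/0]_x a x) ^ 2 <= INR #|T| * \big[Rplus/0]_x a x ^ 2.
Proof.
set S := \big[Rplus/0]_x a x; set Q := \big[Rplus/0]_x a x ^ 2.
have : 0 <= \big[Rplus/0]_x \big[Rplus/0]_y (a x - a y) ^ 2.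
  by apply: Rsum_ge0 => x _; apply: Rsum_ge0 => y _; exact: pow2_ge_0.
have -> : \big[Rplus/0]_x \big[Rplus/0]_y (a x - a y) ^ 2 =
          2 * (INR #|T| * Q - S ^ 2).
  rewrite (eq_bigr (fun x => INR #|T| * a x ^ 2 + Q - 2 * S * a x)) => [|x _].
    by rewrite Rsum_sub big_split -!big_distrr /= -/Q -/S Rsum_constT; set N := INR #|T|; ring.
  rewrite (eq_bigr (fun y => a x ^ 2 + a y ^ 2 - 2 * a x * a y)) => [|y _]; last ring.
  by rewrite Rsum_sub big_split Rsum_constT -big_distrr /= -/Q -/S; set N := INR #|T|; ring.
lra.
Qed.

Lemma Rprod_indicator (T : finType) (P : pred T) :
  \big[Rmult/1]_i (if P i then 1 else 0) = if [forall i, P i] then 1 else 0.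
Proof.
case: (pickP (fun i => ~~ P i)) => [i /negbTE Pi | allP].
  rewrite (bigD1 i) //= Pi Rmult_0_l.
  by case: forallP => // /(_ i); rewrite Pi.
have -> : [forall i, P i] by apply/forallP => i; apply/negbFE/allP.
by apply: big1 => i _; rewrite (negbFE (allP i)).
Qed.

Lemma Rsum_set1_indicator (T : finType) (D : {set T}) :
  \big[Rplus/0]_j (if D == [set j] then 1 else 0) = if #|D| == 1%N then 1 else 0.
Proof.
case: cards1P => [[j0 ->] | noD].
  rewrite (eq_bigr (fun j => if j == j0 then 1 else 0)) => [|j _].
    by rewrite Rsum_if_eq; ring.
  by rewrite (inj_eq set1_inj) eq_sym.
by apply: big1 => j _; case: eqP => // Dj; case: noD; exists j.
Qed.

Lemma meas_sub (T : finType) (mu nu : T -> R) (S : {set T}) :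
  meas mu S - meas nu S = \big[Rplus/0]_(x in S) (mu x - nu x).
Proof. by rewrite Rsum_sub. Qed.

Lemma Rsum_in_sqr_le (T : finType) (d : T -> R) (S : {set T}) :
  \big[Rplus/0]_x d x = 0 ->
  4 * (\big[Rplus/0]_(x in S) d x) ^ 2 <= INR #|T| * \big[Rplus/0]_x d x ^ 2.
Proof.
move=> d0.
have half : 2 * Rabs (\big[Rplus/0]_(x in S) d x) <= \big[Rplus/0]_x Rabs (d x).
  rewrite (bigID (fun x => x \in S)) /= in d0.
  rewrite [X in _ <= X](bigID (fun x => x \in S)) /=.
  have := Rabs_sum_le (fun x => x \in S) d.
  have := Rabs_sum_le (fun x => x \notin S) d.
  have -> : \big[Rplus/0]_(x | x \notin S) d x = - \big[Rplus/0]_(x in S) d x by lra.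
  rewrite Rabs_Ropp; lra.
have abs_sqr : \big[Rplus/0]_x Rabs (d x) ^ 2 = \big[Rplus/0]_x d x ^ 2.
  by apply: eq_bigr => x _; exact: pow2_abs.
have := Rsum_sqr_le (fun x => Rabs (d x)); rewrite abs_sqr.
have := Rabs_pos (\big[Rplus/0]_(x in S) d x).
rewrite -(pow2_abs (\big[Rplus/0]_(x in S) d x)); nra.
Qed.

Lemma TV_sqr_le (T : finType) (mu nu : T -> R) :
  \big[Rplus/0]_x (mu x - nu x) = 0 ->
  TV mu nu ^ 2 <= / 4 * (INR #|T| * \big[Rplus/0]_x (mu x - nu x) ^ 2).
Proof.
move=> d0; set B := / 4 * _.
have B_ge0 : 0 <= B.
  apply: Rmult_le_pos; first lra.
  by apply: Rmult_le_pos; [exact: pos_INR | apply: Rsum_ge0 => x _; exact: pow2_ge_0].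
suff : 0 <= TV mu nu /\ TV mu nu ^ 2 <= B by case.
rewrite /TV; apply: (big_ind (fun v => 0 <= v /\ v ^ 2 <= B)) => [|u v hu hv|S _].
- by split; lra.
- exact: (@Rmax_case u v (fun w => 0 <= w /\ w ^ 2 <= B)).
- split; first exact: Rabs_pos.
  by rewrite meas_sub pow2_abs; have := Rsum_in_sqr_le S d0; rewrite /B; lra.
Qed.

Lemma INR_expn (m k : nat) : INR (m ^ k) = INR m ^ k.
Proof. by elim: k => // k IH; rewrite expnS mult_INR IH. Qed.

Lemma exp_mul_INR (m : nat) (x : R) : exp (INR m * x) = exp x ^ m.
Proof.
elim: m => [|m IH]; first by rewrite Rmult_0_l exp_0.
by rewrite S_INR Rmult_plus_distr_r Rmult_1_l exp_plus IH /=; ring.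
Qed.

Lemma one_add_div_pow_le_exp (n : nat) (u : R) :
  (0 < n)%N -> 0 <= u -> (1 + u / INR n) ^ n <= exp u.
Proof.
move=> /ltP/lt_0_INR n_gt0 u_ge0.
have -> : exp u = exp (u / INR n) ^ n.
  by rewrite -exp_mul_INR; f_equal; field; lra.
apply: pow_incr; split; last exact: exp_ineq1_le.
have : 0 < / INR n by apply: Rinv_0_lt_compat.
rewrite /Rdiv; nra.
Qed.

Lemma exp_5_4_le_4 : exp (5 / 4) <= 4.
Proof.
have e4 : exp (5 / 4) ^ 4 = exp 1 ^ 5.
  by rewrite -!exp_mul_INR; f_equal; simpl; field.
have : exp 1 ^ 5 <= 3 ^ 5.
  by apply: pow_incr; split; [left; exact: exp_pos | exact: exp_le_3].
rewrite -e4 => e4_le; apply: Rnot_lt_le => e_gt4.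
have : 4 ^ 4 <= exp (5 / 4) ^ 4 by apply: pow_incr; lra.
simpl in *; lra.
Qed.

Lemma sqr_one_sub_le_exp (t : R) : 0 <= t <= 5 / 4 -> (1 - t) ^ 2 <= exp (- (2 * t)).
Proof.
move=> [t_ge0 t_le].
have -> : exp (- (2 * t)) = exp (- t) ^ 2 by rewrite -exp_mul_INR; f_equal; simpl; ring.
have et_gt0 := exp_pos (- t).
have [t_le1|t_gt1] := Rle_or_lt t 1.
  by apply: pow_incr; have := exp_ineq1_le (- t); lra.
have : / 4 <= exp (- t).
  have : exp (- (5 / 4)) <= exp (- t).
    by case: (Rle_lt_or_eq_dec (- (5 / 4)) (- t)) => [|/exp_increasing|->]; lra.
  rewrite exp_Ropp; have := Rinv_le_contravar _ _ (exp_pos (5 / 4)) exp_5_4_le_4; lra.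
simpl; nra.
Qed.

(* This is the only place where [5 <= q] is used: it gives [t <= q / (q - 1) <= 5 / 4]. *)
Lemma spectral_term_le (Q N c : R) (k w : nat) :
  5 <= Q -> 1 <= N -> INR w <= N ->
  INR k = N * (Q - 1) / (2 * Q) * (ln (N * (Q - 1)) + c) ->
  ((1 - INR w * Q / (N * (Q - 1))) ^ k) ^ 2 * (Q - 1) ^ w <= (exp (- c) / N) ^ w.
Proof.
move=> Q5 N1 wN hk; set t := INR w * Q / (N * (Q - 1)).
have w_ge0 := pos_INR w.
have D_gt0 : 0 < N * (Q - 1) by nra.
have I_gt0 := Rinv_0_lt_compat _ D_gt0.
have ID : / (N * (Q - 1)) * (N * (Q - 1)) = 1 by field; lra.
have t_range : 0 <= t <= 5 / 4.
  have : INR w * Q <= 5 / 4 * (N * (Q - 1)) by nra.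
  rewrite /t /Rdiv; split; nra.
have decay : ((1 - t) ^ k) ^ 2 <= exp (INR k * (- (2 * t))).
  rewrite exp_mul_INR -pow_mult Nat.mul_comm pow_mult.
  by apply: pow_incr; split; [exact: pow2_ge_0 | exact: sqr_one_sub_le_exp].
have kt : INR k * (- (2 * t)) = INR w * (- ln (N * (Q - 1)) + - c).
  by rewrite hk /t; field; lra.
rewrite kt exp_mul_INR exp_plus exp_Ropp exp_ln // in decay.
apply: Rle_trans (Rmult_le_compat_r _ _ _ (pow_le _ w _) decay) _; first lra.
by right; rewrite -Rpow_mult_distr; f_equal; field; lra.
Qed.

Section HammingSpectrum.

Variables n q : nat.
Implicit Types (b : {ffun 'I_n -> bool}) (y z : X n q).

Definition efactor (s : bool) (a : 'I_q) : R :=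
  if s then (if val a == 0%N then INR q - 1 else -1) else 1.

Definition efun b y : R := \big[Rmult/1]_i efactor (b i) (y i).

Definition weight b : nat := #|[set i | b i]|.

Definition eigval b : R := 1 - INR (weight b) * INR q / (INR n * (INR q - 1)).

Definition bzero : {ffun 'I_n -> bool} := [ffun => false].

Lemma efactor_true (Hq : (0 < q)%N) a :
  efactor true a = if a == Ordinal Hq then INR q - 1 else -1.
Proof. by rewrite /efactor -val_eqE. Qed.

Lemma efactor_sum (Hq : (0 < q)%N) s :
  \big[Rplus/0]_a efactor s a = if s then 0 else INR q.
Proof.
case: s; last by rewrite Rsum_constT card_ord Rmult_1_r.
under eq_bigr do rewrite (efactor_true Hq).
by rewrite Rsum_if_eq card_ord; ring.
Qed.

Lemma efactor_dot (Hq : (0 < q)%N) s s' :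
  \big[Rplus/0]_a (efactor s a * efactor s' a) =
  if s == s' then INR q * (if s then INR q - 1 else 1) else 0.
Proof.
case: s; case: s' => /=.
- rewrite (eq_bigr (fun a => if a == Ordinal Hq then (INR q - 1) ^ 2 else 1)) => [|a _].
    by rewrite Rsum_if_eq card_ord; ring.
  by rewrite -val_eqE /=; case: eqP => _; ring.
- by under eq_bigr do rewrite Rmult_1_r; exact: (efactor_sum Hq true).
- by under eq_bigr do rewrite Rmult_1_l; exact: (efactor_sum Hq true).
- by under eq_bigr do rewrite Rmult_1_l; rewrite Rsum_constT card_ord.
Qed.

Lemma Rprod_if_weight b (a : R) :
  \big[Rmult/1]_i (if b i then a else 1) = a ^ weight b.
Proof.
rewrite -big_mkcond /= -Rprod_const.
by apply: eq_bigl => i; rewrite inE.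
Qed.

Lemma Rsum_if_weight b (u v : R) :
  \big[Rplus/0]_i (if b i then u else v) = INR n * v + (u - v) * INR (weight b).
Proof.
rewrite (eq_bigr (fun i => v + (if b i then u - v else 0))) => [|i _]; last first.
  by case: (b i); ring.
rewrite big_split /= -big_mkcond Rsum_constT card_ord /=.
rewrite (eq_bigl (fun i => i \in [set i | b i])) => [|i]; last by rewrite inE.
by rewrite Rsum_const /weight; ring.
Qed.

Lemma efun_orth (Hq : (0 < q)%N) b b' :
  \big[Rplus/0]_y (efun b y * efun b' y) =
  if b == b' then INR q ^ n * (INR q - 1) ^ weight b else 0.
Proof.
under eq_bigr do rewrite -big_split /=.
rewrite -(bigA_distr_bigA (fun i a => efactor (b i) a * efactor (b' i) a)) /=.
under eq_bigr do rewrite (efactor_dot Hq).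
case: eqP => [<- | neq_bb'].
  under eq_bigr do rewrite eqxx.
  by rewrite big_split /= Rprod_const card_ord -Rprod_if_weight.
case: (pickP (fun i => b i != b' i)) => [i bi | eqb].
  by rewrite (bigD1 i) //= (negbTE bi) Rmult_0_l.
by case: neq_bb'; apply/ffunP => i; apply/eqP/negbFE/eqb.
Qed.

Lemma pn_sum_prod z y :
  pn z y = / (INR n * (INR q - 1)) *
           \big[Rplus/0]_j \big[Rmult/1]_i (if (z i != y i) == (i == j) then 1 else 0).
Proof.
have diff1 j : [forall i, (z i != y i) == (i == j)] = ([set i | z i != y i] == [set j]).
  apply/forallP/eqP => [eqj | /setP Dj i].
    by apply/setP => i; rewrite !inE; move/eqP: (eqj i).
  by have := Dj i; rewrite !inE => ->.
under eq_bigr do rewrite Rprod_indicator diff1.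
by rewrite Rsum_set1_indicator /pn /hdist; case: ifP => _; ring.
Qed.

Lemma efun_neighbour_sum (Hq : (0 < q)%N) b y j :
  \big[Rplus/0]_z (efun b z * \big[Rmult/1]_i (if (z i != y i) == (i == j) then 1 else 0)) =
  (if b j then -1 else INR q - 1) * efun b y.
Proof.
under eq_bigr do rewrite -big_split /=.
rewrite -(bigA_distr_bigA
  (fun i a => efactor (b i) a * (if (a != y i) == (i == j) then 1 else 0))).
rewrite (bigD1 j) //= [efun b y](bigD1 j) //= eqxx.
rewrite (eq_bigr (fun i => efactor (b i) (y i))) => [|i ij]; last first.
  rewrite (eq_bigr (fun a => if a == y i then efactor (b i) a else 0)) => [|a _].
    by rewrite -big_mkcond big_pred1_eq.
  by rewrite (negbTE ij); case: (a == y i) => /=; ring.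
rewrite (eq_bigr (fun a => if a == y j then 0 else efactor (b j) a)) => [|a _]; last first.
  by case: (a == y j) => /=; ring.
by rewrite Rsum_if_neq (efactor_sum Hq); case: (b j) => /=; ring.
Qed.

Lemma sum_efun (Hq : (0 < q)%N) y :
  \big[Rplus/0]_b efun b y = if y == x0 n Hq then INR q ^ n else 0.
Proof.
rewrite /efun -(bigA_distr_bigA (fun i s => efactor s (y i))) /=.
under eq_bigr do rewrite big_bool /=.
case: eqP => [-> | ne_y].
  rewrite (eq_bigr (fun _ => INR q)) => [|i _]; first by rewrite Rprod_const card_ord.
  by rewrite ffunE /=; ring.
case: (pickP (fun i => val (y i) != 0%N)) => [i yi | all0].
  by rewrite (bigD1 i) //= (negbTE yi); ring.
case: ne_y; apply/ffunP => i; rewrite ffunE; apply: val_inj.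
exact/eqP/negbFE/all0.
Qed.

Lemma card_X : INR #|X n q| = INR q ^ n.
Proof. by rewrite card_ffun !card_ord INR_expn. Qed.

Lemma weight_bzero : weight bzero = 0%N.
Proof. by apply/eqP; rewrite cards_eq0; apply/eqP/setP => i; rewrite !inE ffunE. Qed.

Lemma efun_bzero y : efun bzero y = 1.
Proof. by apply: big1 => i _; rewrite ffunE. Qed.

Lemma eigval_bzero : eigval bzero = 1.
Proof. by rewrite /eigval weight_bzero /= /Rdiv; ring. Qed.

Lemma sum_efun_eq0 (Hq : (0 < q)%N) b : b != bzero -> \big[Rplus/0]_y efun b y = 0.
Proof.
move=> nz; transitivity (\big[Rplus/0]_y (efun b y * efun bzero y)).
  by apply: eq_bigr => y _; rewrite efun_bzero Rmult_1_r.
by rewrite efun_orth // (negbTE nz).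
Qed.

Lemma sum_sqr_efun_comb (Hq : (0 < q)%N) (P : pred {ffun 'I_n -> bool})
    (f : {ffun 'I_n -> bool} -> R) :
  \big[Rplus/0]_y (\big[Rplus/0]_(b | P b) (f b * efun b y)) ^ 2 =
  INR q ^ n * \big[Rplus/0]_(b | P b) (f b ^ 2 * (INR q - 1) ^ weight b).
Proof.
rewrite (eq_bigr (fun y => \big[Rplus/0]_(b | P b) \big[Rplus/0]_(b' | P b')
    (f b * f b' * (efun b y * efun b' y)))) => [|y _]; last first.
  rewrite -Rsqr_pow2 /Rsqr big_distrl /=; apply: eq_bigr => b _.
  by rewrite big_distrr /=; apply: eq_bigr => b' _; ring.
rewrite exchange_big /= big_distrr /=; apply: eq_bigr => b Pb.
rewrite exchange_big /=.
under eq_bigr do rewrite -big_distrr /= (efun_orth Hq).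
rewrite (bigD1 b) //= eqxx big1 => [|b' /andP [_ nb]]; first ring.
by rewrite eq_sym (negbTE nb); ring.
Qed.

Lemma weight_le b : (weight b <= n)%N.
Proof. by rewrite /weight -[n in (_ <= n)%N]card_ord max_card. Qed.

Lemma sum_pow_weight (u : R) :
  \big[Rplus/0]_(b | b != bzero) u ^ weight b = (1 + u) ^ n - 1.
Proof.
have sum_all : \big[Rplus/0]_b u ^ weight b = (1 + u) ^ n.
  under eq_bigr do rewrite -Rprod_if_weight.
  rewrite -(bigA_distr_bigA (fun _ (s : bool) => if s then u else 1)) /=.
  by under eq_bigr do rewrite big_bool /= Rplus_comm; rewrite Rprod_const card_ord.
by rewrite (bigD1 bzero) //= weight_bzero /= in sum_all; rewrite -sum_all Rplus_minus_l.
Qed.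

Hypotheses (q_gt1 : (1 < q)%N) (n_gt0 : (0 < n)%N).

Let q_gt1R : 1 < INR q. Proof. by apply: lt_1_INR; apply/ltP. Qed.
Let n_gt0R : 0 < INR n. Proof. by apply: lt_0_INR; apply/ltP. Qed.

Lemma efun_eigen b y :
  \big[Rplus/0]_z (efun b z * pn z y) = eigval b * efun b y.
Proof.
rewrite (eq_bigr (fun z => / (INR n * (INR q - 1)) * \big[Rplus/0]_j
   (efun b z * \big[Rmult/1]_i (if (z i != y i) == (i == j) then 1 else 0)))) => [|z _].
  rewrite -big_distrr /= exchange_big /=.
  under eq_bigr do rewrite (efun_neighbour_sum (ltnW q_gt1)).
  by rewrite -big_distrl /= Rsum_if_weight /eigval; field; lra.
by rewrite pn_sum_prod -big_distrr /=; ring.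
Qed.

Lemma nu_expansion (Hq : (0 < q)%N) k y :
  nu Hq k y = / INR q ^ n * \big[Rplus/0]_b (eigval b ^ k * efun b y).
Proof.
have qn : INR q ^ n <> 0 by apply: pow_nonzero; lra.
elim: k y => [|k IH] y.
  rewrite /nu /= (eq_bigr (fun b => efun b y)) => [|b _]; last ring.
  by rewrite sum_efun (eq_sym y); case: (_ == _); field.
rewrite /nu /= (eq_bigr (fun z => / INR q ^ n *
    \big[Rplus/0]_b (eigval b ^ k * (efun b z * pn z y)))) => [|z _]; last first.
  rewrite -[pnk k _ z]/(nu Hq k z) IH Rmult_assoc big_distrl /=; congr (_ * _).
  by apply: eq_bigr => b _; ring.
rewrite -big_distrr /= exchange_big /=; congr (_ * _); apply: eq_bigr => b _.
by rewrite -big_distrr /= efun_eigen /=; ring.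
Qed.

Lemma nu_sub_unif (Hq : (0 < q)%N) k y :
  nu Hq k y - pi_unif y =
  / INR q ^ n * \big[Rplus/0]_(b | b != bzero) (eigval b ^ k * efun b y).
Proof.
rewrite nu_expansion (bigD1 bzero) //= eigval_bzero efun_bzero pow1 /pi_unif card_X.
ring.
Qed.

Lemma sum_nu_sub_unif (Hq : (0 < q)%N) k :
  \big[Rplus/0]_(y : X n q) (nu Hq k y - pi_unif y) = 0.
Proof.
under eq_bigr do rewrite nu_sub_unif.
rewrite -big_distrr /= exchange_big big1 /= ?Rmult_0_r // => b nz.
by rewrite -big_distrr /= sum_efun_eq0 // Rmult_0_r.
Qed.

Lemma card_mul_sum_sqr_nu_sub_unif (Hq : (0 < q)%N) k :
  INR #|X n q| * \big[Rplus/0]_(y : X n q) (nu Hq k y - pi_unif y) ^ 2 =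
  \big[Rplus/0]_(b | b != bzero) ((eigval b ^ k) ^ 2 * (INR q - 1) ^ weight b).
Proof.
have qn : INR q ^ n <> 0 by apply: pow_nonzero; lra.
under eq_bigr do rewrite nu_sub_unif Rpow_mult_distr.
by rewrite Rsum_mull (sum_sqr_efun_comb Hq) card_X; field.
Qed.

End HammingSpectrum.

Lemma spectral_sum_le (q n k : nat) (c : R) :
  (5 <= q)%N -> (1 <= n)%N ->
  INR k = INR n * (INR q - 1) / (2 * INR q) * (ln (INR n * (INR q - 1)) + c) ->
  \big[Rplus/0]_(b | b != bzero n) ((eigval q b ^ k) ^ 2 * (INR q - 1) ^ weight b)
    <= exp (exp (- c)) - 1.
Proof.
move=> q_ge5 n_ge1 hk.
have q5 : 5 <= INR q by have := le_INR 5 q (elimT leP q_ge5); simpl; lra.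
have n1 : 1 <= INR n by have := le_INR 1 n (elimT leP n_ge1); simpl; lra.
apply: Rle_trans (Rsum_le (fun b _ => spectral_term_le q5 n1
  (le_INR _ _ (elimT leP (weight_le b))) hk)) _.
rewrite sum_pow_weight.
have := one_add_div_pow_le_exp n_ge1 (Rlt_le _ _ (exp_pos (- c))); lra.
Qed.

Theorem theorem1p1 (q n : nat) (c : R) (k : nat)
  (hq : (5 <= q)%N) (hn : (1 <= n)%N) (hc : 0 < c)
  (hk : INR k = INR n * (INR q - 1) / (2 * INR q) * (ln (INR n * (INR q - 1)) + c)) :
  TV (@nu n q (leq_trans (isT : (0 < 5)%N) hq) k) (@pi_unif n q) ^ 2
     <= / 4 * (exp (exp (- c)) - 1).
Proof.
have q_gt1 : (1 < q)%N by apply: leq_trans hq.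
apply: Rle_trans (TV_sqr_le (sum_nu_sub_unif q_gt1 hn _ k)) _.
apply: Rmult_le_compat_l; first lra.
by rewrite card_mul_sum_sqr_nu_sub_unif //; exact: spectral_sum_le.
Qed.
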